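(* Let $N\ge1$, $z_1,\dots,z_N\in\mathbb{C}^*$, $n_1,\dots,n_N\in\mathbb{C}$, and put $z=z_1z_2\cdots z_N$. Let \[ \Phi(X)=\sum_{i=1}^N z_1^{-1}\cdots z_{i-1}^{-1}z_{i+1}\cdots z_N\,a_i\in U,\qquad \Phi(Y)=\sum_{i=1}^N z_1^{-1}\cdots z_{i-1}^{-1}(z_i^2-z_i^{-2})z_{i+1}\cdots z_N\,b_i\in U', \] where $U=\mathrm{span}(a_1,\dots,a_N)\subset\mathrm{Cl}_N$ and $U'=\mathrm{span}(b_1,\dots,b_N)\subset \mathrm{Cl}_N$. Let $\langle\cdot,\cdot\rangle:U\times U'\to\mathbb{C}$ be the pairing with $\langle a_j,b_i\rangle=\delta_{ij}$, and set $W=\{w\in U:\langle w,\Phi(Y)\rangle=0\}$ and $W'=\{w'\in U':\langle \Phi(X),w'\rangle=0\}$. Assume $z^2-z^{-2}\neq 0$. Then: (1) $U=\mathbb{C}\Phi(X)\oplus W$ and $U'=\mathbb{C}\Phi(Y)\oplus W'$; (2) the subspaces $W$ and $W'$ generate a subalgebra $C(X,Y)$ of $\mathrm{Cl}_N$ which is isomorphic to the Clifford algebra $\mathrm{Cl}_{\dim W}$, and $C(X,Y)$ is the super-commutant in $\mathrm{Cl}_N$ of the subalgebra generated by $\Phi(X)$ and $\Phi(Y)$.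
   Context: $\mathrm{Cl}_N$ is the Clifford superalgebra over $\mathbb{C}$ generated by odd elements $a_1,\dots,a_N,b_1,\dots,b_N$ with relations $a_ia_j+a_ja_i=0$, $b_ib_j+b_jb_i=0$, $a_ib_j+b_ja_i=\delta_{ij}$. The elements $\Phi(X),\Phi(Y)$ are the images of the generators $X,Y$ of quantum $\mathfrak{gl}(1|1)$ under the homomorphism $\Phi$ realizing the tensor product $V_{z_1,n_1}\otimes\cdots\otimes V_{z_N,n_N}$ on the Clifford module $\bigwedge^\bullet U$. The super-commutant of a subalgebra $A$ is the span of the homogeneous elements $c$ with $ac=(-1)^{|a||c|}ca$ for all homogeneous $a\in A$. *)

From HB Require Import structures.
From mathcomp Require Import all_boot all_order all_algebra all_field.
Set Implicit Arguments. Unset Strict Implicit. Unset Printing Implicit Defensive.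
Import GRing.Theory Num.Theory.
Local Open Scope ring_scope.

(* The ground field is an arbitrary numClosedFieldType K
   (e.g. the complex numbers R[i]).  The Clifford superalgebra Cl_N is
   represented by an arbitrary finite-dimensional K-algebra A together with
   elements a_i, b_i (i < N) satisfying the Clifford relations, generating A,
   and with dim A = 4^N: such an (A, a, b) is exactly Cl_N (up to a unique
   isomorphism fixing the generators). *)

Section Clifford.
Variables (K : fieldType) (A : falgType K).

Definition cl_rel (n : nat) (a b : 'I_n -> A) : Prop :=
  [/\ forall i j, a i * a j + a j * a i = 0,
      forall i j, b i * b j + b j * b i = 0 &
      forall i j, a i * b j + b j * a i = (i == j)%:R].

Definition gen_span (n : nat) (a b : 'I_n -> A) : {vspace A} :=
  (<<[seq a i | i <- enum 'I_n]>> + <<[seq b i | i <- enum 'I_n]>>)%VS.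

(* The subalgebra E is (via the generators a, b lying in E) a Clifford
   algebra Cl_n: generated by elements satisfying the Clifford relations,
   and of the dimension 4^n of Cl_n. *)
Definition is_clifford_on (E : {vspace A}) (n : nat) (a b : 'I_n -> A) : Prop :=
  [/\ forall i, a i \in E /\ b i \in E,
      cl_rel a b,
      agenv (gen_span a b) = E &
      \dim E = 4 ^ n]%N.

Definition cl_mono (n : nat) (a b : 'I_n -> A) (ST : {set 'I_n} * {set 'I_n}) : A :=
  (\prod_(i < n | i \in ST.1) a i) * (\prod_(j < n | j \in ST.2) b j).

(* Z/2-grading of the Clifford superalgebra (generators are odd):
   the parity-p part is spanned by the monomials of total degree of parity p. *)
Definition cl_deg_par (n : nat) (ST : {set 'I_n} * {set 'I_n}) : bool :=
  odd (#|ST.1| + #|ST.2|).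

Definition cl_monos (n : nat) (a b : 'I_n -> A) (p : bool) : seq A :=
  map (cl_mono a b)
    (filter (fun ST => cl_deg_par ST == p) (enum {: {set 'I_n} * {set 'I_n}})).

Definition cl_part (n : nat) (a b : 'I_n -> A) (p : bool) : {vspace A} :=
  <<cl_monos a b p>>%VS.

Definition supercomm_hom (n : nat) (a b : 'I_n -> A) (B : {vspace A}) (p : bool) (c : A) : Prop :=
  c \in cl_part a b p /\
  forall (q : bool) (x : A), x \in (B :&: cl_part a b q)%VS ->
     x * c = (-1) ^+ (p && q) * c * x.

Definition in_supercommutant (n : nat) (a b : 'I_n -> A) (B : {vspace A}) (x : A) : Prop :=
  exists (k : nat) (c : 'I_k -> A) (l : 'I_k -> K),
    (forall t, exists p, supercomm_hom a b B p (c t)) /\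
    x = \sum_(t < k) l t *: c t.

Definition spanU (n : nat) (a : 'I_n -> A) : {vspace A} :=
  <<[seq a i | i <- enum 'I_n]>>%VS.

(* The pairing U x U' -> K with <a_j, b_i> = delta_ij (coordinates in the
   bases (a_i) and (b_i)). *)
Definition cl_pairing (n : nat) (a b : 'I_n -> A) (u u' : A) : K :=
  \sum_(i < n) coord [tuple a j | j < n] i u * coord [tuple b j | j < n] i u'.

Definition PhiX (n : nat) (z : 'I_n -> K) (a : 'I_n -> A) : A :=
  \sum_(i < n) ((\prod_(j < n | (j < i)%N) (z j)^-1) *
                (\prod_(j < n | (i < j)%N) z j)) *: a i.

Definition PhiY (n : nat) (z : 'I_n -> K) (b : 'I_n -> A) : A :=
  \sum_(i < n) ((\prod_(j < n | (j < i)%N) (z j)^-1) * ((z i) ^+ 2 - (z i) ^- 2) *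
                (\prod_(j < n | (i < j)%N) z j)) *: b i.

End Clifford.

From HB Require Import structures.
From mathcomp Require Import all_boot all_order all_algebra all_field.
From mathcomp Require Import ring.
Set Implicit Arguments. Unset Strict Implicit. Unset Printing Implicit Defensive.
Import GRing.Theory Num.Theory.
Local Open Scope ring_scope.

(* In Cl_N the anticommutator u u' + u' u of u in U and u' in U' is the scalar
   <u, u'>, and the anticommutator of Phi(X) and Phi(Y) telescopes to
   z^2 - z^-2 <> 0.  This gives (1), and shows that a basis of W and the dual
   basis of W' satisfy the Clifford relations of Cl_(N-1).
   Conjugation by gamma = prod_j (1 - 2 a_j b_j) is the parity automorphism
   sigma of Cl_N, and u e = sigma(e) u for u in span(Phi(X), Phi(Y)) and e in
   C(X,Y).  Hence Cl_N = C(X,Y) span(1, X, Y, XY), so dim C(X,Y) >= 4^(N-1);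
   conversely an algebra generated by N-1 Clifford pairs (c_j, d_j) lies in the
   ordered product of the 4-dimensional spans of 1, c_j, d_j, c_j d_j.  The same
   commutation rule gives super-commutation of C(X,Y) with the algebra generated
   by X and Y.  Finally, if X y = sigma(y) X and Y y = sigma(y) Y, write
   y = e0 + e1 X + e2 Y + e3 XY with e_i in C(X,Y); multiplying by XY and by YX,
   whose sum is z^2 - z^-2, gives y = e0 + e3 YX, and then e3 Y = 0. *)

Lemma sorted_enum_ord n : sorted (fun i j : 'I_n => (i < j)%N) (enum 'I_n).
Proof. by rewrite -(@sorted_map _ _ val ltn) val_enum_ord iota_ltn_sorted. Qed.

Lemma big_setU1_min (R : Type) (idx : R) (op : Monoid.law idx) n (F : 'I_n -> R)
    (k : 'I_n) (S : {set 'I_n}) : (forall j, j \in S -> k < j)%N ->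
  \big[op/idx]_(j | j \in k |: S) F j = op (F k) (\big[op/idx]_(j | j \in S) F j).
Proof.
move=> kS; rewrite -big_filter -[X in _ = op _ X]big_filter.
suff -> : [seq j <- index_enum 'I_n | j \in k |: S] = k :: [seq j <- index_enum 'I_n | j \in S].
  by rewrite big_cons.
have ltn_ord_trans : transitive (fun i j : 'I_n => (i < j)%N).
  by move=> i j l; apply: ltn_trans.
apply: (irr_sorted_eq ltn_ord_trans).
- by move=> i; exact: ltnn.
- by rewrite [index_enum _]unlock -enumT (sorted_filter ltn_ord_trans) ?sorted_enum_ord.
- rewrite /= path_sortedE // [index_enum _]unlock -enumT.
  rewrite (sorted_filter ltn_ord_trans) ?sorted_enum_ord ?andbT //.
  by apply/allP => j; rewrite mem_filter => /andP [/kS].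
- by move=> i; rewrite inE !mem_filter mem_index_enum !andbT in_setU1.
Qed.

Lemma idempotent_reflection (R : pzRingType) (t : R) :
  t * t = t -> (1 - t *+ 2) * (1 - t *+ 2) = 1.
Proof.
move=> tt; have uu : t *+ 2 * (t *+ 2) = t *+ 2 + t *+ 2.
  by rewrite mulrnAl mulrnAr tt mulr2n.
by rewrite mulrBl mul1r mulrBr mulr1 uu opprB addrK subrK.
Qed.

Lemma prod_mulr_self1 (R : pzRingType) (I : Type) (r : seq I) (F : I -> R) :
  (forall i j, GRing.comm (F i) (F j)) -> (forall i, F i * F i = 1) ->
  (\prod_(i <- r) F i) * (\prod_(i <- r) F i) = 1.
Proof.
move=> Fcomm F2; elim: r => [|j r IHr]; first by rewrite big_nil mulr1.
have Fj_comm : GRing.comm (F j) (\prod_(i <- r) F i) by apply: commr_prod => i _; apply: Fcomm.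
by rewrite big_cons -mulrA (mulrA _ (F j)) -Fj_comm -mulrA (mulrA (F j)) F2 mul1r IHr.
Qed.

Section SubalgebraGeneration.
Variables (K : fieldType) (A : falgType K).
Implicit Types (V S : {vspace A}) (x y : A).

Lemma mem1_agenv V : 1 \in agenv V.
Proof. by rewrite memvE sub1_agenv. Qed.

Lemma memv_agenv V v : v \in V -> v \in agenv V.
Proof. exact: subvP (sub_agenv V) v. Qed.

Lemma memv_agenvM V : {in agenv V &, forall x y, x * y \in agenv V}.
Proof. by move=> x y Vx Vy; rewrite -agenvM memv_mul. Qed.

Lemma agenv_sub_mulclosed V S : 1 \in S ->
  (forall v x, v \in V -> x \in S -> v * x \in S) -> (agenv V <= S)%VS.
Proof. by move=> S1 VS; apply: agenv_sub_modl; [rewrite -memvE | apply/prodvP]. Qed.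

Lemma agenv_lfun_eq V (f g : 'End(A)) : f 1 = g 1 ->
  (forall v x, v \in V -> f x = g x -> f (v * x) = g (v * x)) ->
  {in agenv V, f =1 g}.
Proof.
move=> fg1 fgM; have memK x : (x \in lker (f - g)) = (f x == g x).
  by rewrite memv_ker !lfun_simp subr_eq0.
have /subvP sub : (agenv V <= lker (f - g))%VS.
  by apply: agenv_sub_mulclosed => [|v x Vv]; rewrite !memK ?fg1 // => /eqP /(fgM v x Vv) ->.
by move=> x /sub; rewrite memK => /eqP.
Qed.

Lemma memv_prodv_line S v w : w \in (S * <[v]>)%VS -> exists2 s, s \in S & w = s * v.
Proof. by rewrite -limg_amulr => /memv_imgP [s Ss ->]; exists s; rewrite ?lfunE. Qed.

Lemma span_prodv_sub (s t : seq A) S :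
  (forall x y, x \in s -> y \in t -> x * y \in S) -> (<<s>> * <<t>> <= S)%VS.
Proof.
move=> st; apply/prodvP => u v.
move=> /(@coord_span _ _ _ (in_tuple s)) -> /(@coord_span _ _ _ (in_tuple t)) ->.
rewrite mulr_suml; apply: memv_suml => i _; rewrite mulr_sumr; apply: memv_suml => j _.
by rewrite -scalerAl -scalerAr !memvZ // st ?mem_nth.
Qed.

Lemma span_line_scomm x (s : seq A) :
  (forall y, y \in s -> x * y = y * x \/ x * y = - (y * x)) ->
  (<[x]> * <<s>> <= <<s>> * <[x]>)%VS.
Proof.
move=> xs; rewrite -{1}span_seq1; apply: span_prodv_sub => _ y /[1!inE] /eqP -> sy.
by case: (xs y sy) => ->; rewrite ?memvN memv_mul ?memv_span ?memv_line.
Qed.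

Lemma span_line_absorb x (s : seq A) : (forall y, y \in s -> x * y \in <<s>>%VS) ->
  (<[x]> * <<s>> <= <<s>>)%VS.
Proof.
by move=> xs; rewrite -span_seq1; apply: span_prodv_sub => _ y /[1!inE] /eqP ->; apply: xs.
Qed.

Lemma span_prodv_subl (s : seq A) S : (forall u, u \in s -> (<[u]> * S <= S)%VS) ->
  (<<s>> * S <= S)%VS.
Proof.
rewrite span_def big_distrl /= big_seq => sS.
by elim/big_rec: _ => [|u U su sU]; rewrite ?sub0v // subv_add sS.
Qed.

Lemma bigprodv_absorb (I : eqType) (P : I -> {vspace A}) x i (r : seq I) : i \in r ->
  (forall j, j \in r -> j != i -> (<[x]> * P j <= P j * <[x]>)%VS) ->
  (<[x]> * P i <= P i)%VS ->
  (<[x]> * \big[@prodv _ _/1%VS]_(j <- r) P j <= \big[@prodv _ _/1%VS]_(j <- r) P j)%VS.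
Proof.
elim: r => // j r IHr /[1!inE] ir Pcomm Pabs; rewrite big_cons prodvA.
have [-> | ji] := eqVneq j i; first exact: prodvSl.
apply: subv_trans (prodvSl _ (Pcomm j (mem_head _ _) ji)) _.
rewrite -prodvA prodvSr // IHr // => [|k kr]; first by rewrite eq_sym (negPf ji) in ir.
by apply: Pcomm; rewrite inE kr orbT.
Qed.

Lemma dim_bigprodv (I : Type) (P : I -> {vspace A}) (r : seq I) m :
  (forall j, \dim (P j) <= m)%N -> (\dim (\big[@prodv _ _/1%VS]_(j <- r) P j) <= m ^ size r)%N.
Proof.
move=> Pm; elim: r => [|j r IHr]; first by rewrite big_nil dimv1.
by rewrite big_cons expnS (leq_trans (dim_prodv _ _)) // leq_mul.
Qed.

Lemma mem1_bigprodv (I : Type) (P : I -> {vspace A}) (r : seq I) :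
  (forall j, 1 \in P j) -> 1 \in \big[@prodv _ _/1%VS]_(j <- r) P j.
Proof.
move=> P1; elim: r => [|j r IHr]; first by rewrite big_nil memv_line.
by rewrite big_cons; have := memv_mul (P1 j) IHr; rewrite mulr1.
Qed.

Lemma mul_prod_scomm (I : Type) (F : I -> A) (s : I -> K) x (r : seq I) (P : pred I) :
  (forall j, P j -> x * F j = s j *: (F j * x)) ->
  x * \prod_(j <- r | P j) F j = (\prod_(j <- r | P j) s j) *: (\prod_(j <- r | P j) F j * x).
Proof.
move=> xF; elim: r => [|j r IHr]; first by rewrite !big_nil scale1r mul1r mulr1.
rewrite !big_cons; case: ifP => // Pj.
by rewrite mulrA xF // -scalerAl -(mulrA (F j) x) IHr scalerAr scalerA -scalerAr mulrA.
Qed.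

End SubalgebraGeneration.

Section CliffordAlgebra.
Variables (K : fieldType) (A : falgType K).
Hypothesis two_neq0 : (2%:R : K) != 0.

Lemma double_eq0 (x : A) : x + x = 0 -> x = 0.
Proof.
move=> xx0; have /eqP : (2%:R : K) *: x = 0 by rewrite scaler_nat mulr2n.
by rewrite scaler_eq0 (negPf two_neq0) => /eqP.
Qed.

Lemma anticomm_mul (x y w : A) :
  x * y = - (y * x) -> x * w = - (w * x) -> x * (y * w) = y * w * x.
Proof. by move=> xy xw; rewrite mulrA xy mulNr -(mulrA y x w) xw mulrN opprK mulrA. Qed.

Variables (n : nat) (c d : 'I_n -> A).
Hypothesis hcd : cl_rel c d.

Lemma cl_ccN i j : c i * c j = - (c j * c i).
Proof. by case: hcd => cc _ _; apply/eqP; rewrite -addr_eq0 cc. Qed.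

Lemma cl_ddN i j : d i * d j = - (d j * d i).
Proof. by case: hcd => _ dd _; apply/eqP; rewrite -addr_eq0 dd. Qed.

Lemma cl_cdN i j : i != j -> c i * d j = - (d j * c i).
Proof. by case: hcd => _ _ cd ij; apply/eqP; rewrite -addr_eq0 cd (negPf ij). Qed.

Lemma cl_dcN i j : i != j -> d i * c j = - (c j * d i).
Proof. by move=> ij; rewrite cl_cdN ?opprK // eq_sym. Qed.

Lemma cl_dc i : d i * c i = 1 - c i * d i.
Proof. by case: hcd => _ _ /(_ i i); rewrite eqxx mulr1n => <-; rewrite addrC addKr. Qed.

Lemma cl_cc0 i : c i * c i = 0.
Proof. by apply: double_eq0; case: hcd. Qed.

Lemma cl_dd0 i : d i * d i = 0.
Proof. by apply: double_eq0; case: hcd. Qed.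

Lemma cl_cdc i : c i * d i * c i = c i.
Proof. by rewrite -mulrA cl_dc mulrBr mulr1 mulrA cl_cc0 mul0r subr0. Qed.

Lemma cl_dcd i : d i * (c i * d i) = d i.
Proof. by rewrite mulrA cl_dc mulrBl mul1r -mulrA cl_dd0 mulr0 subr0. Qed.

Definition cl_factor j : {vspace A} := span [:: 1; c j; d j; c j * d j].

Lemma cl_factor_scomm j u : u * c j = - (c j * u) -> u * d j = - (d j * u) ->
  (<[u]> * cl_factor j <= cl_factor j * <[u]>)%VS.
Proof.
move=> uc ud; apply: span_line_scomm => _ /[!inE] /or4P [] /eqP ->.
- by left; rewrite mulr1 mul1r.
- by right.
- by right.
- by left; apply: anticomm_mul.
Qed.

Lemma cl_factor_absorb j u : u \in [:: c j; d j] -> (<[u]> * cl_factor j <= cl_factor j)%VS.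
Proof.
move=> /predU1P [-> | /predU1P [-> | //]]; apply: span_line_absorb => y.
  move=> /predU1P [-> | /predU1P [-> | /predU1P [-> | /predU1P [-> | //]]]].
  - by rewrite mulr1 memv_span // !inE eqxx ?(orTb, orbT).
  - by rewrite cl_cc0 mem0v.
  - by rewrite memv_span // !inE eqxx ?(orTb, orbT).
  - by rewrite mulrA cl_cc0 mul0r mem0v.
move=> /predU1P [-> | /predU1P [-> | /predU1P [-> | /predU1P [-> | //]]]].
- by rewrite mulr1 memv_span // !inE eqxx ?(orTb, orbT).
- by rewrite cl_dc memvB ?memv_span // !inE eqxx ?(orTb, orbT).
- by rewrite cl_dd0 mem0v.
- by rewrite cl_dcd memv_span // !inE eqxx ?(orTb, orbT).
Qed.

Lemma agenv_cl_sub_factors :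
  (agenv (gen_span c d) <= \big[@prodv _ _/1%VS]_(j <- enum 'I_n) cl_factor j)%VS.
Proof.
apply: agenv_sub_modl.
  by rewrite -memvE mem1_bigprodv // => j; apply: memv_span; rewrite inE eqxx.
rewrite /gen_span prodvDl subv_add.
apply/andP; split; apply: span_prodv_subl => _ /mapP [i _ ->].
- apply: (bigprodv_absorb (P := cl_factor) (i := i)) => [|j _ ji|]; first exact: mem_enum.
    by apply: cl_factor_scomm; [exact: cl_ccN | apply: cl_cdN; rewrite eq_sym].
  by apply: cl_factor_absorb; rewrite mem_head.
- apply: (bigprodv_absorb (P := cl_factor) (i := i)) => [|j _ ji|]; first exact: mem_enum.
    by apply: cl_factor_scomm; [apply: cl_dcN; rewrite eq_sym | exact: cl_ddN].
  by apply: cl_factor_absorb; rewrite !inE eqxx ?orbT.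
Qed.

Lemma dim_agenv_cl : (\dim (agenv (gen_span c d)) <= 4 ^ n)%N.
Proof.
apply: leq_trans (dimvS agenv_cl_sub_factors) _.
by rewrite -[in X in (_ <= _ ^ X)%N](size_enum_ord n) dim_bigprodv // => j; apply: dim_span.
Qed.

Definition cl_monos_on (D : {set 'I_n}) : {vspace A} :=
  span [seq cl_mono c d ST | ST <- enum {: {set 'I_n} * {set 'I_n}} & ST.1 :|: ST.2 \subset D].

Lemma memv_cl_monos_on (D S T : {set 'I_n}) :
  S :|: T \subset D -> cl_mono c d (S, T) \in cl_monos_on D.
Proof. by move=> STD; apply/memv_span/map_f; rewrite mem_filter STD mem_enum. Qed.

Lemma cl_c_mono (k : 'I_n) (S T : {set 'I_n}) : (forall j, j \in S -> k < j)%N ->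
  c k * cl_mono c d (S, T) = cl_mono c d (k |: S, T).
Proof. by move=> kS; rewrite /cl_mono /= mulrA big_setU1_min. Qed.

Lemma cl_d_mono (k : 'I_n) (S T : {set 'I_n}) : (forall j, j \in T -> k < j)%N -> k \notin S ->
  d k * cl_mono c d (S, T) = (-1) ^+ #|S| *: cl_mono c d (S, k |: T).
Proof.
move=> kT kS; rewrite /cl_mono /= mulrA (mul_prod_scomm (F := c) (s := fun=> -1)) => [|j jS].
  by rewrite prodr_const -scalerAl -mulrA big_setU1_min.
by rewrite cl_dcN ?scaleN1r //; apply: contraNneq kS => ->.
Qed.

Lemma cl_factors_sub_monos (r : seq 'I_n) : sorted (fun i j : 'I_n => (i < j)%N) r ->
  (\big[@prodv _ _/1%VS]_(j <- r) cl_factor j <= cl_monos_on [set j in r])%VS.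
Proof.
elim: r => [_ | k r IHr].
  rewrite big_nil -memvE (_ : 1 = cl_mono c d (set0, set0)).
    by apply: memv_cl_monos_on; rewrite setU0 sub0set.
  by rewrite /cl_mono !big_pred0 ?mulr1 // => i; rewrite in_set0.
rewrite /= path_sortedE; last by move=> i j l; apply: ltn_trans.
move=> /andP [/allP k_lt r_sorted]; rewrite big_cons.
apply: subv_trans (prodvSr _ (IHr r_sorted)) _.
apply: span_prodv_sub => y m y_k /mapP [[S T]]; rewrite mem_filter => /andP [STr _] ->.
have k_lt_ST j : j \in S :|: T -> (k < j)%N by move/(subsetP STr); rewrite inE => /k_lt.
have kS j : j \in S -> (k < j)%N by move=> jS; apply: k_lt_ST; rewrite inE jS.
have kT j : j \in T -> (k < j)%N by move=> jT; apply: k_lt_ST; rewrite inE jT orbT.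
have k_notin_S : k \notin S by apply/negP => /kS; rewrite ltnn.
have mem_kr S' T' : S' :|: T' = k |: (S :|: T) ->
    cl_mono c d (S', T') \in cl_monos_on [set j in k :: r].
  by move=> eqST; apply: memv_cl_monos_on; rewrite eqST set_cons setUS.
move: y_k => /predU1P [-> | /predU1P [-> | /predU1P [-> | /predU1P [-> | //]]]].
- rewrite mul1r; apply: memv_cl_monos_on.
  by rewrite set_cons (subset_trans STr) ?subsetUr.
- by rewrite cl_c_mono // mem_kr // setUA.
- by rewrite cl_d_mono // memvZ // mem_kr // setUCA.
- rewrite -mulrA cl_d_mono // -scalerAr cl_c_mono // memvZ // mem_kr //.
  by rewrite setUACA setUid.
Qed.

Lemma agenv_cl_sub_parts :
  (agenv (gen_span c d) <= cl_part c d false + cl_part c d true)%VS.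
Proof.
apply: subv_trans agenv_cl_sub_factors _.
apply: subv_trans (cl_factors_sub_monos (sorted_enum_ord n)) _.
apply/span_subvP => _ /mapP [ST _ ->].
have : cl_mono c d ST \in cl_part c d (cl_deg_par ST).
  by apply/memv_span/map_f; rewrite mem_filter eqxx mem_enum.
by case: cl_deg_par => mono_in; [apply: subvP (addvSr _ _) _ mono_in |
                                 apply: subvP (addvSl _ _) _ mono_in].
Qed.

Lemma gen_span_odd : (gen_span c d <= cl_part c d true)%VS.
Proof.
have odd_mono ST : cl_deg_par ST -> cl_mono c d ST \in cl_part c d true.
  by move=> parST; apply/memv_span/map_f; rewrite mem_filter parST mem_enum.
rewrite subv_add; apply/andP; split; apply/span_subvP => _ /mapP [i _ ->].
  have -> : c i = cl_mono c d ([set i], set0) by rewrite /cl_mono big_set1 big_set0 mulr1.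
  by rewrite odd_mono // /cl_deg_par cards1 cards0.
have -> : d i = cl_mono c d (set0, [set i]) by rewrite /cl_mono big_set1 big_set0 mul1r.
by rewrite odd_mono // /cl_deg_par cards1 cards0.
Qed.

(* Each factor anticommutes with c_j and d_j and commutes with the other
   generators, so conjugation by cl_gamma is the parity automorphism. *)
Definition cl_gamma : A := \prod_(j < n) (1 - (c j * d j) *+ 2).

Lemma cl_gamma_anticomm u i :
  u * (1 - (c i * d i) *+ 2) = - ((1 - (c i * d i) *+ 2) * u) ->
  (forall j, j != i -> u * (c j * d j) = c j * d j * u) ->
  cl_gamma * u = - (u * cl_gamma).
Proof.
move=> ui uj; rewrite (mul_prod_scomm (s := fun j => if j == i then -1 else 1)).
  by rewrite (bigD1 i) //= eqxx big1 ?mulr1 ?scaleN1r ?opprK // => j /negPf ->.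
move=> j _; case: eqVneq => [-> | ji]; first by rewrite ui scaleN1r.
by rewrite scale1r mulrBr mulrBl mulr1 mul1r mulrnAr mulrnAl uj.
Qed.

Lemma cl_gamma_c i : cl_gamma * c i = - (c i * cl_gamma).
Proof.
apply: (cl_gamma_anticomm (i := i)) => [|j ji]; last first.
  by apply: anticomm_mul; [exact: cl_ccN | apply: cl_cdN; rewrite eq_sym].
rewrite mulrBr mulrBl mulr1 mul1r mulrnAr mulrnAl mulrA cl_cc0 mul0r mul0rn subr0 cl_cdc.
by rewrite mulr2n opprB addrK.
Qed.

Lemma cl_gamma_d i : cl_gamma * d i = - (d i * cl_gamma).
Proof.
apply: (cl_gamma_anticomm (i := i)) => [|j ji]; last first.
  by apply: anticomm_mul; [apply: cl_dcN; rewrite eq_sym | exact: cl_ddN].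
rewrite mulrBr mulrBl mulr1 mul1r mulrnAr mulrnAl cl_dcd -mulrA cl_dd0 mulr0 mul0rn subr0.
by rewrite mulr2n opprD addrA subrr sub0r.
Qed.

Lemma cl_gamma2 : cl_gamma * cl_gamma = 1.
Proof.
have t_comm i j : GRing.comm (c i * d i) (c j * d j).
  have [-> // | ij] := eqVneq i j.
  apply/commr_sym/commrM; apply/commr_sym/anticomm_mul.
  - exact: cl_ccN.
  - exact: cl_cdN.
  - exact: cl_dcN.
  - exact: cl_ddN.
apply: prod_mulr_self1 => [i j | i].
  by apply: commrB; [exact: commr1 | apply: commrMn; apply/commr_sym/commrB;
    [exact: commr1 | exact/commrMn/t_comm]].
by apply: idempotent_reflection; rewrite mulrA cl_cdc.
Qed.

Lemma cl_gamma_mono ST :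
  cl_gamma * cl_mono c d ST = (-1) ^+ cl_deg_par ST *: (cl_mono c d ST * cl_gamma).
Proof.
have gamma_prod (F : 'I_n -> A) (S : {set 'I_n}) :
    (forall j, cl_gamma * F j = - (F j * cl_gamma)) ->
    cl_gamma * \prod_(j < n | j \in S) F j =
    (-1) ^+ #|S| *: (\prod_(j < n | j \in S) F j * cl_gamma).
  move=> gF; rewrite (mul_prod_scomm (s := fun=> -1)) ?prodr_const // => j _.
  by rewrite gF scaleN1r.
rewrite /cl_mono mulrA (gamma_prod c _ cl_gamma_c).
rewrite -scalerAl -(mulrA _ cl_gamma) (gamma_prod d _ cl_gamma_d).
by rewrite scalerAr scalerA -exprD signr_odd -scalerAr mulrA.
Qed.

Definition cl_parity : 'End(A) := (amull cl_gamma \o amulr cl_gamma)%VF.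

Lemma cl_parityE x : cl_parity x = cl_gamma * x * cl_gamma.
Proof. by rewrite comp_lfunE !lfunE /= mulrA. Qed.

Lemma cl_parityM x y : cl_parity (x * y) = cl_parity x * cl_parity y.
Proof. by rewrite !cl_parityE !mulrA -(mulrA _ cl_gamma cl_gamma) cl_gamma2 mulr1. Qed.

Lemma cl_parity1 : cl_parity 1 = 1.
Proof. by rewrite cl_parityE mulr1 cl_gamma2. Qed.

Lemma cl_parityK : involutive cl_parity.
Proof. by move=> x; rewrite !cl_parityE !mulrA cl_gamma2 mul1r -mulrA cl_gamma2 mulr1. Qed.

Lemma cl_parity_gen u : u \in gen_span c d -> cl_parity u = - u.
Proof.
pose anti_gamma := lker (amull cl_gamma + amulr cl_gamma)%R.
have mem_anti v : (v \in anti_gamma) = (cl_gamma * v == - (v * cl_gamma)).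
  by rewrite memv_ker add_lfunE !lfunE /= addr_eq0.
have /subvP gen_anti : (gen_span c d <= anti_gamma)%VS.
  rewrite /gen_span subv_add; apply/andP; split; apply/span_subvP => _ /mapP [i _ ->].
    by rewrite mem_anti cl_gamma_c.
  by rewrite mem_anti cl_gamma_d.
move=> /gen_anti; rewrite mem_anti cl_parityE => /eqP ->.
by rewrite mulNr -mulrA cl_gamma2 mulr1.
Qed.

Lemma cl_parity_part (p : bool) x : x \in cl_part c d p -> cl_parity x = (-1) ^+ p *: x.
Proof.
pose eigen := lker (cl_parity - (-1) ^+ p *: \1)%VF.
have mem_eigen y : (y \in eigen) = (cl_parity y == (-1) ^+ p *: y).
  by rewrite memv_ker !lfun_simp subr_eq0.
have /subvP part_eigen : (cl_part c d p <= eigen)%VS.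
  apply/span_subvP => y /mapP [ST]; rewrite mem_filter => /andP [/eqP parST _] ->.
  by rewrite mem_eigen cl_parityE cl_gamma_mono parST -scalerAl -mulrA cl_gamma2 mulr1.
by move=> /part_eigen; rewrite mem_eigen => /eqP.
Qed.

Lemma cl_part_parity (p : bool) x : x \in agenv (gen_span c d) ->
  cl_parity x = (-1) ^+ p *: x -> x \in cl_part c d p.
Proof.
move=> /(subvP agenv_cl_sub_parts) /memv_addP [x0 x0_even [x1 x1_odd ->]].
rewrite linearD /= (cl_parity_part x0_even) (cl_parity_part x1_odd) scale1r scaleN1r.
case: p; rewrite ?expr0 ?expr1 ?scale1r ?scaleN1r.
  rewrite opprD => /addIr /eqP; rewrite -addr_eq0 => /eqP /double_eq0 ->.
  by rewrite add0r.
move/addrI/eqP; rewrite eq_sym -addr_eq0 => /eqP /double_eq0 ->.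
by rewrite addr0.
Qed.

Lemma cl_parity_agenv V x : (V <= gen_span c d)%VS -> x \in agenv V -> cl_parity x \in agenv V.
Proof.
move=> /subvP V_gen; have /subvP : (agenv V <= cl_parity @^-1: agenv V)%VS.
  apply: agenv_sub_mulclosed => [|v y Vv]; rewrite -!memv_preim ?cl_parity1 ?mem1_agenv //.
  rewrite cl_parityM cl_parity_gen ?V_gen // mulNr memvN => y_in.
  by apply: memv_agenvM => //; apply: memv_agenv.
by move=> sub /sub; rewrite -memv_preim.
Qed.

Lemma mul_agenv_parity V u e : (V <= gen_span c d)%VS ->
  (forall v, v \in V -> u * v = - (v * u)) -> e \in agenv V -> u * e = cl_parity e * u.
Proof.
move=> /subvP V_gen uV; pose f := amull u; pose g := (amulr u \o cl_parity)%VF.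
have fE x : f x = u * x by rewrite lfunE.
have gE x : g x = cl_parity x * u by rewrite comp_lfunE lfunE.
have f1 : f 1 = g 1 by rewrite fE gE cl_parity1 mulr1 mul1r.
have fM v x : v \in V -> f x = g x -> f (v * x) = g (v * x).
  rewrite !fE !gE => Vv ux; rewrite mulrA uV // mulNr -mulrA ux.
  by rewrite cl_parityM (cl_parity_gen (V_gen _ Vv)) !mulNr mulrA.
by move=> /(agenv_lfun_eq f1 fM); rewrite fE gE.
Qed.

Lemma agenv_supercomm V e g (p q : bool) : (V <= gen_span c d)%VS ->
  (forall v, v \in V -> v * e = (-1) ^+ p *: (e * v)) ->
  g \in agenv V -> cl_parity g = (-1) ^+ q *: g -> g * e = (-1) ^+ (p && q) *: (e * g).
Proof.
move=> /subvP V_gen Ve g_in g_par.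
pose tau : 'End(A) := if p then cl_parity else \1%VF.
have tau1 : tau 1 = 1 by rewrite /tau; case: (p); rewrite ?cl_parity1 ?id_lfunE.
have tauM x y : tau (x * y) = tau x * tau y.
  by rewrite /tau; case: (p); rewrite ?cl_parityM ?id_lfunE.
have tauV v : v \in V -> tau v = (-1) ^+ p *: v.
  by rewrite /tau; case: (p) => Vv; rewrite ?cl_parity_gen ?V_gen ?id_lfunE ?scaleN1r ?scale1r.
pose f := amulr e; pose h := (amull e \o tau)%VF.
have fE x : f x = x * e by rewrite lfunE.
have hE x : h x = e * tau x by rewrite comp_lfunE lfunE.
have f1 : f 1 = h 1 by rewrite fE hE tau1 mul1r mulr1.
have fM v x : v \in V -> f x = h x -> f (v * x) = h (v * x).
  rewrite !fE !hE => Vv xe; rewrite -mulrA xe mulrA Ve // -scalerAl tauM (tauV v Vv).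
  by rewrite -scalerAl -scalerAr mulrA.
have := agenv_lfun_eq f1 fM g_in; rewrite fE hE => ->.
by rewrite /tau; case: (p) => /=; rewrite ?g_par ?id_lfunE ?expr0 ?scale1r // scalerAr.
Qed.

End CliffordAlgebra.

Section Anticommutator.
Variables (K : fieldType) (A : falgType K).
Implicit Types (x y u v w : A) (k : K).

Definition acomm x y := x * y + y * x.

Lemma acommC x y : acomm x y = acomm y x.
Proof. by rewrite /acomm addrC. Qed.

Lemma acommDl x y w : acomm (x + y) w = acomm x w + acomm y w.
Proof. by rewrite /acomm mulrDl mulrDr addrACA. Qed.

Lemma acommDr x y w : acomm w (x + y) = acomm w x + acomm w y.
Proof. by rewrite !(acommC w) acommDl. Qed.

Lemma acommZl k x y : acomm (k *: x) y = k *: acomm x y.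
Proof. by rewrite /acomm -scalerAl -scalerAr scalerDr. Qed.

Lemma acommZr k x y : acomm x (k *: y) = k *: acomm x y.
Proof. by rewrite !(acommC x) acommZl. Qed.

Lemma acommBl x y w : acomm (x - y) w = acomm x w - acomm y w.
Proof. by rewrite -scaleN1r acommDl acommZl scaleN1r. Qed.

Lemma acomm_suml (I : Type) (r : seq I) (P : pred I) (F : I -> A) y :
  acomm (\sum_(i <- r | P i) F i) y = \sum_(i <- r | P i) acomm (F i) y.
Proof. by rewrite /acomm mulr_suml mulr_sumr -big_split. Qed.

Lemma acomm_sumr (I : Type) (r : seq I) (P : pred I) (F : I -> A) y :
  acomm y (\sum_(i <- r | P i) F i) = \sum_(i <- r | P i) acomm y (F i).
Proof. by rewrite acommC acomm_suml; apply: eq_bigr => i _; rewrite acommC. Qed.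

Lemma acomm0l y : acomm 0 y = 0.
Proof. by rewrite /acomm mul0r mulr0 addr0. Qed.

Lemma acomm0r y : acomm y 0 = 0.
Proof. by rewrite acommC acomm0l. Qed.

Lemma acomm_eq0 x y : acomm x y = 0 -> x * y = - (y * x).
Proof. by move/eqP; rewrite addr_eq0 => /eqP. Qed.

Lemma scale1_eq0 k : (k *: (1 : A) == 0) = (k == 0).
Proof. by rewrite scaler_eq0 oner_eq0 orbF. Qed.

Lemma acomm_span0 x (s : seq A) :
  (forall y, y \in s -> acomm x y = 0) -> {in <<s>>%VS, forall y, acomm x y = 0}.
Proof.
have memK y : (y \in lker (amull x + amulr x)%R) = (acomm x y == 0).
  by rewrite memv_ker add_lfunE !lfunE.
move=> xs; have /subvP sub : (<<s>> <= lker (amull x + amulr x)%R)%VS.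
  by apply/span_subvP => z /xs /eqP; rewrite memK.
by move=> y /sub; rewrite memK => /eqP.
Qed.

Lemma acomm_line_complement (U W : {vspace A}) x y k (phi : A -> K) :
  x \in U -> k != 0 -> acomm x y = k *: 1 -> {in U, forall u, acomm u y = phi u *: 1} ->
  (forall w, w \in W = (w \in U) && (acomm w y == 0)) ->
  U = (<[x]> + W)%VS /\ directv (<[x]> + W)%VS.
Proof.
move=> Ux k0 xy phiU memW; split.
  apply/eqP; rewrite eqEsubv subv_add -memvE Ux /=; apply/andP; split; last first.
    by apply/subvP => w; rewrite memW => /andP [].
  apply/subvP => u Uu; rewrite -(subrK (phi u / k *: x) u) addrC.
  rewrite memv_add ?memvZ ?memv_line // memW memvB ?memvZ //= acommBl acommZl xy.
  by rewrite phiU // scalerA divfK // subrr.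
apply/directv_addP/eqP; rewrite -subv0; apply/subvP => _ /[!memv_cap] /andP [/vlineP [t ->]].
rewrite memW acommZl xy scalerA scale1_eq0 mulf_eq0 (negPf k0) orbF => /andP [_ /eqP ->].
by rewrite scale0r mem0v.
Qed.

Lemma dim_line_complement (U V : {vspace A}) x : x != 0 ->
  U = (<[x]> + V)%VS /\ directv (<[x]> + V)%VS -> \dim V = (\dim U).-1.
Proof.
by move=> x0 [-> /directv_addP/dimv_disjoint_sum ->]; rewrite dim_vline x0.
Qed.

End Anticommutator.

Section DualFamilies.
Variables (K : fieldType) (A : falgType K) (n : nat) (e f : 'I_n -> A).

Lemma acomm_sum0 (l t : 'I_n -> K) : (forall i j, acomm (e i) (f j) = 0) ->
  acomm (\sum_i l i *: e i) (\sum_j t j *: f j) = 0.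
Proof.
move=> ef; rewrite acomm_sumr big1 // => j _; rewrite acommZr acomm_suml big1 ?scaler0 // => i _.
by rewrite acommZl ef scaler0.
Qed.

Hypothesis ef_dual : forall i j, acomm (e i) (f j) = (i == j)%:R.

Lemma acomm_sum_dual (l : 'I_n -> K) j : acomm (\sum_i l i *: e i) (f j) = l j *: 1.
Proof.
rewrite acomm_suml (bigD1 j) //= big1 ?addr0 => [|i /negPf ij].
  by rewrite acommZl ef_dual eqxx.
by rewrite acommZl ef_dual ij scaler0.
Qed.

Lemma acomm_sum_pairing (l t : 'I_n -> K) :
  acomm (\sum_i l i *: e i) (\sum_j t j *: f j) = (\sum_i l i * t i) *: 1.
Proof.
rewrite acomm_sumr scaler_suml; apply: eq_bigr => j _.
by rewrite acommZr acomm_sum_dual scalerA mulrC.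
Qed.

Lemma free_dual_family : free [tuple e j | j < n].
Proof.
apply/freeP => l l0 i.
have sum0 : \sum_j l j *: e j = 0.
  by rewrite -[RHS]l0; apply: eq_big => // j _; rewrite -tnth_nth tnth_mktuple.
by have /eqP := acomm_sum_dual l i; rewrite sum0 acomm0l eq_sym scale1_eq0 => /eqP.
Qed.

End DualFamilies.

Section CliffordGenerators.
Variables (K : fieldType) (A : falgType K) (n : nat) (a b : 'I_n -> A).
Hypothesis hab : cl_rel a b.

Lemma spanU_coord (e : 'I_n -> A) u : u \in spanU e ->
  u = \sum_i coord [tuple e j | j < n] i u *: e i.
Proof.
move=> u_span; rewrite {1}(@coord_span _ _ _ [tuple e j | j < n] u) //.
by apply: eq_bigr => i _; rewrite -tnth_nth tnth_mktuple.
Qed.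

Lemma memv_spanU (e : 'I_n -> A) i : e i \in spanU e.
Proof. by apply/memv_span/map_f; rewrite mem_enum. Qed.

Lemma sum_spanU (e : 'I_n -> A) (l : 'I_n -> K) : \sum_i l i *: e i \in spanU e.
Proof. by apply: memv_suml => i _; rewrite memvZ ?memv_spanU. Qed.

Lemma acomm_ab i j : acomm (a i) (b j) = (i == j)%:R.
Proof. by case: hab => _ _; apply. Qed.

Lemma acomm_ba i j : acomm (b i) (a j) = (i == j)%:R.
Proof. by rewrite acommC acomm_ab eq_sym. Qed.

Lemma acomm_spanU_pairing u u' : u \in spanU a -> u' \in spanU b ->
  acomm u u' = cl_pairing a b u u' *: 1.
Proof.
by move=> /spanU_coord {1}-> /spanU_coord {1}->; rewrite acomm_sum_pairing //; apply: acomm_ab.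
Qed.

Lemma acomm_spanU_a u1 u2 : u1 \in spanU a -> u2 \in spanU a -> acomm u1 u2 = 0.
Proof.
by move=> /spanU_coord -> /spanU_coord ->; apply: acomm_sum0; case: hab => + _ _; apply.
Qed.

Lemma acomm_spanU_b u1 u2 : u1 \in spanU b -> u2 \in spanU b -> acomm u1 u2 = 0.
Proof.
by move=> /spanU_coord -> /spanU_coord ->; apply: acomm_sum0; case: hab => _ + _; apply.
Qed.

Lemma dim_spanU_a : \dim (spanU a) = n.
Proof. by have /eqP := free_dual_family acomm_ab; rewrite size_tuple. Qed.

Lemma dim_spanU_b : \dim (spanU b) = n.
Proof. by have /eqP := free_dual_family acomm_ba; rewrite size_tuple. Qed.

Lemma spanU_a_eq0 u : u \in spanU a -> (forall k, acomm u (b k) = 0) -> u = 0.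
Proof.
move=> /spanU_coord u_coord ub0; rewrite u_coord big1 // => i _.
have /eqP := ub0 i; rewrite {1}u_coord acomm_sum_dual; last exact: acomm_ab.
by rewrite scale1_eq0 => /eqP ->; rewrite scale0r.
Qed.

End CliffordGenerators.

Section IsotropicPair.
Variables (K : fieldType) (A : falgType K) (W W' : {vspace A}) (phi : A -> A -> K).
Hypothesis W_iso : {in W &, forall w1 w2, acomm w1 w2 = 0}.
Hypothesis W'_iso : {in W' &, forall w1 w2, acomm w1 w2 = 0}.
Hypothesis acomm_WW' : {in W & W', forall w w', acomm w w' = phi w w' *: 1}.
Hypothesis W_nondeg : forall w, w \in W -> {in W', forall w', acomm w w' = 0} -> w = 0.
Hypothesis dimW' : \dim W' = \dim W.

Local Notation n := (\dim W).

Local Notation c := (tnth (vbasis W)).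
Local Notation e := (tnth (tcast dimW' (vbasis W'))).
Let gram : 'M[K]_n := \matrix_(i, j) phi (c i) (e j).
Let d (j : 'I_n) : A := \sum_k invmx gram k j *: e k.

Let mem_c i : c i \in W.
Proof. exact/vbasis_mem/mem_tnth. Qed.

Let mem_e i : e i \in W'.
Proof. by apply: vbasis_mem; rewrite (tnth_nth 0) val_tcast mem_nth // size_tuple dimW'. Qed.

Let mem_d j : d j \in W'.
Proof. by apply: memv_suml => k _; rewrite memvZ. Qed.

Let span_c : <<[seq c i | i <- enum 'I_n]>>%VS = W.
Proof. by rewrite map_tnth_enum (span_basis (vbasisP W)). Qed.

Let span_e : <<[seq e i | i <- enum 'I_n]>>%VS = W'.
Proof. by rewrite map_tnth_enum val_tcast (span_basis (vbasisP W')). Qed.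

Let gram_unit : gram \in unitmx.
Proof.
rewrite -row_free_unit; apply: inj_row_free => v v_gram.
pose w := \sum_i v 0 i *: c i.
have W_w : w \in W by apply: memv_suml => i _; rewrite memvZ.
have w_e j : acomm w (e j) = 0.
  rewrite acomm_suml (eq_bigr (fun i => (v 0 i * gram i j) *: 1)) => [|i _]; last first.
    by rewrite acommZl acomm_WW' // mxE scalerA.
  rewrite -scaler_suml; have := congr1 (fun M : 'M_(1, n) => M 0 j) v_gram.
  by rewrite !mxE => ->; rewrite scale0r.
have w0 : w = 0.
  apply: W_nondeg => //; rewrite -span_e.
  by apply: acomm_span0 => _ /mapP [j _ ->].
apply/rowP => i; rewrite mxE.
move/freeP: (basis_free (vbasisP W)) => /(_ (fun i => v 0 i)); apply.
by rewrite -[RHS]w0; apply: eq_big => // k _; rewrite (tnth_nth 0).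
Qed.

Let acomm_cd i j : acomm (c i) (d j) = (i == j)%:R *: 1.
Proof.
rewrite acomm_sumr (eq_bigr (fun k => (gram i k * invmx gram k j) *: 1)) => [|k _]; last first.
  by rewrite acommZr acomm_WW' // mxE scalerA mulrC.
rewrite -scaler_suml; have := congr1 (fun M : 'M_n => M i j) (mulmxV gram_unit).
by rewrite !mxE => ->.
Qed.

Let span_d : <<[seq d i | i <- enum 'I_n]>>%VS = W'.
Proof.
have free_d : free [tuple d j | j < n].
  by apply: (free_dual_family (f := c)) => i j; rewrite acommC acomm_cd scaler_nat eq_sym.
have dim_d : \dim <<[seq d i | i <- enum 'I_n]>>%VS = n.
  by have /eqP := free_d; rewrite size_tuple => dim_d; exact: dim_d.
apply/eqP; rewrite eqEdim dim_d dimW' leqnn andbT.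
by apply/span_subvP => _ /mapP [j _ ->].
Qed.

Lemma isotropic_pair_cl_basis :
  exists c d : 'I_(\dim W) -> A, cl_rel c d /\ gen_span c d = (W + W')%VS.
Proof.
exists c, d; split; last by rewrite /gen_span span_c span_d.
by split=> i j; [exact: W_iso | exact: W'_iso | have := acomm_cd i j; rewrite scaler_nat].
Qed.

End IsotropicPair.

Section PhiCoefficients.
Variables (K : fieldType) (N : nat) (z : 'I_N -> K).

Definition PhiX_coef (i : 'I_N) : K :=
  (\prod_(j < N | (j < i)%N) (z j)^-1) * (\prod_(j < N | (i < j)%N) z j).

Definition PhiY_coef (i : 'I_N) : K :=
  (\prod_(j < N | (j < i)%N) (z j)^-1) * ((z i) ^+ 2 - (z i) ^- 2) *
  (\prod_(j < N | (i < j)%N) z j).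

Lemma PhiXY_coef_sum :
  \sum_i PhiX_coef i * PhiY_coef i = (\prod_(i < N) z i) ^+ 2 - (\prod_(i < N) z i) ^- 2.
Proof.
pose T k := (\prod_(j < N | (j < k)%N) (z j)^-1 * \prod_(j < N | (k <= j)%N) z j) ^+ 2.
have T_step (i : 'I_N) : PhiX_coef i * PhiY_coef i = T i - T i.+1.
  have ge_i : \prod_(j < N | (i <= j)%N) z j = z i * \prod_(j < N | (i < j)%N) z j.
    rewrite (bigD1 i) ?leqnn //=; congr (_ * _); apply: eq_bigl => j.
    by rewrite [(i < j)%N]ltn_neqAle andbC eq_sym.
  have lt_iS : \prod_(j < N | (j < i.+1)%N) (z j)^-1 =
               (z i)^-1 * \prod_(j < N | (j < i)%N) (z j)^-1.
    rewrite (bigD1 i) ?ltnSn //=; congr (_ * _); apply: eq_bigl => j.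
    by rewrite ltnS [(j < i)%N]ltn_neqAle andbC.
  by rewrite /PhiX_coef /PhiY_coef /T ge_i lt_iS -exprVn; ring.
have T0 : T 0 = (\prod_(i < N) z i) ^+ 2.
  by rewrite /T big_pred0 // mul1r; congr (_ ^+ 2); apply: eq_bigl => j.
have TN : T N = (\prod_(i < N) z i) ^- 2.
  rewrite /T [X in (_ * X) ^+ 2]big_pred0 => [|j]; last by rewrite leqNgt ltn_ord.
  by rewrite mulr1 -exprVn -prodfV; congr (_ ^+ 2); apply: eq_bigl => j; rewrite ltn_ord.
rewrite (eq_bigr (fun i : 'I_N => T i - T i.+1)) => [|i _]; last exact: T_step.
rewrite -(big_mkord xpredT (fun i => T i - T i.+1)) -[LHS]opprK -sumrN.
rewrite (eq_bigr (fun i => T i.+1 - T i)) => [|i _]; last by rewrite opprB.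
by rewrite telescope_sumr // opprB T0 TN.
Qed.

End PhiCoefficients.

Section PhiXYCommutant.
Variables (K : fieldType) (A : falgType K).
Hypothesis two_neq0 : (2%:R : K) != 0.
Variables (m : nat) (z : 'I_m.+1 -> K) (a b : 'I_m.+1 -> A).
Hypothesis hab : cl_rel a b.
Hypothesis gen_ab : agenv (gen_span a b) = fullv.
Hypothesis dimA : \dim (fullv : {vspace A}) = (4 ^ m.+1)%N.
Variables (W W' : {vspace A}).
Hypothesis hW : forall w, w \in W = (w \in spanU a) && (cl_pairing a b w (PhiY z b) == 0).
Hypothesis hW' : forall w, w \in W' = (w \in spanU b) && (cl_pairing a b (PhiX z a) w == 0).
Hypothesis kappa_neq0 : (\prod_(i < m.+1) z i) ^+ 2 - (\prod_(i < m.+1) z i) ^- 2 != 0.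

Local Notation X := (PhiX z a).
Local Notation Y := (PhiY z b).
Local Notation kappa := ((\prod_(i < m.+1) z i) ^+ 2 - (\prod_(i < m.+1) z i) ^- 2).
Local Notation E := (agenv (W + W')%VS).
Local Notation B := (agenv (<[X]> + <[Y]>)%VS).
Local Notation parity := (cl_parity a b).

Lemma PhiX_spanU : X \in spanU a. Proof. exact: sum_spanU. Qed.
Lemma PhiY_spanU : Y \in spanU b. Proof. exact: sum_spanU. Qed.

Lemma acomm_PhiXY : acomm X Y = kappa *: 1.
Proof. by rewrite -PhiXY_coef_sum; apply: acomm_sum_pairing; apply: acomm_ab. Qed.

Lemma mem_W w : (w \in W) = (w \in spanU a) && (acomm w Y == 0).
Proof.
rewrite hW; case Uw: (w \in spanU a) => //=.
by rewrite (acomm_spanU_pairing hab Uw PhiY_spanU) scale1_eq0.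
Qed.

Lemma mem_W' w : (w \in W') = (w \in spanU b) && (acomm w X == 0).
Proof.
rewrite hW'; case Uw: (w \in spanU b) => //=.
by rewrite acommC (acomm_spanU_pairing hab PhiX_spanU Uw) scale1_eq0.
Qed.

Lemma W_spanU : (W <= spanU a)%VS.
Proof. by apply/subvP => w; rewrite mem_W => /andP []. Qed.

Lemma W'_spanU : (W' <= spanU b)%VS.
Proof. by apply/subvP => w; rewrite mem_W' => /andP []. Qed.

Lemma spanU_a_decomp : spanU a = (<[X]> + W)%VS /\ directv (<[X]> + W)%VS.
Proof.
apply: (acomm_line_complement (phi := cl_pairing a b ^~ Y) PhiX_spanU kappa_neq0
  acomm_PhiXY _ mem_W).
by move=> u Uu; apply: acomm_spanU_pairing Uu PhiY_spanU.
Qed.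

Lemma spanU_b_decomp : spanU b = (<[Y]> + W')%VS /\ directv (<[Y]> + W')%VS.
Proof.
apply: (acomm_line_complement (phi := cl_pairing a b X) PhiY_spanU kappa_neq0 _ _ mem_W').
  by rewrite acommC acomm_PhiXY.
by move=> u Uu; rewrite acommC; apply: acomm_spanU_pairing PhiX_spanU Uu.
Qed.

Lemma PhiX_neq0 : X != 0.
Proof.
apply/eqP => X0; move: kappa_neq0.
by rewrite -(@scale1_eq0 _ A) -acomm_PhiXY X0 acomm0l eqxx.
Qed.

Lemma PhiY_neq0 : Y != 0.
Proof.
apply/eqP => Y0; move: kappa_neq0.
by rewrite -(@scale1_eq0 _ A) -acomm_PhiXY Y0 acomm0r eqxx.
Qed.

Lemma dimW : \dim W = m.
Proof. by rewrite (dim_line_complement PhiX_neq0 spanU_a_decomp) (dim_spanU_a hab). Qed.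

Lemma dimW' : \dim W' = m.
Proof. by rewrite (dim_line_complement PhiY_neq0 spanU_b_decomp) (dim_spanU_b hab). Qed.

Lemma acomm_PhiXY_W u w : u \in (<[X]> + <[Y]>)%VS -> w \in (W + W')%VS -> acomm u w = 0.
Proof.
move=> /memv_addP [_ /vlineP [s ->] [_ /vlineP [t ->] ->]] /memv_addP [w1 Ww1 [w2 Ww2 ->]].
have Xw1 : acomm X w1 = 0 by apply: (acomm_spanU_a hab PhiX_spanU); apply: subvP W_spanU _ Ww1.
have Xw2 : acomm X w2 = 0 by rewrite acommC; move: Ww2; rewrite mem_W' => /andP [_ /eqP].
have Yw1 : acomm Y w1 = 0 by rewrite acommC; move: Ww1; rewrite mem_W => /andP [_ /eqP].
have Yw2 : acomm Y w2 = 0 by apply: (acomm_spanU_b hab PhiY_spanU); apply: subvP W'_spanU _ Ww2.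
by rewrite !acommDl !acommDr !acommZl Xw1 Xw2 Yw1 Yw2 !scaler0 !addr0.
Qed.

Lemma W_gen : (W + W' <= gen_span a b)%VS.
Proof. exact: addvS W_spanU W'_spanU. Qed.

Lemma PhiXY_gen : (<[X]> + <[Y]> <= gen_span a b)%VS.
Proof. by apply: addvS; rewrite -memvE ?PhiX_spanU ?PhiY_spanU. Qed.

Lemma mul_PhiXY_E u e : u \in (<[X]> + <[Y]>)%VS -> e \in E -> u * e = parity e * u.
Proof.
by move=> u_XY; apply: (mul_agenv_parity two_neq0 hab W_gen) => v /(acomm_PhiXY_W u_XY)/acomm_eq0.
Qed.

Lemma PhiX_XY : X \in (<[X]> + <[Y]>)%VS.
Proof. exact: subvP (addvSl _ _) _ (memv_line X). Qed.

Lemma PhiY_XY : Y \in (<[X]> + <[Y]>)%VS.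
Proof. exact: subvP (addvSr _ _) _ (memv_line Y). Qed.

Lemma W_nondeg w : w \in W -> {in W', forall w', acomm w w' = 0} -> w = 0.
Proof.
move=> Ww Ww'; have Uw : w \in spanU a by apply: subvP W_spanU _ Ww.
apply: (spanU_a_eq0 hab Uw) => k.
have : b k \in (<[Y]> + W')%VS by rewrite -spanU_b_decomp.1 memv_spanU.
case/memv_addP => _ /vlineP [t ->] [w' W'w' ->].
move: Ww; rewrite mem_W => /andP [_ /eqP wY].
by rewrite acommDr acommZr wY Ww' // scaler0 addr0.
Qed.

Lemma W_cl_basis : exists c d : 'I_(\dim W) -> A, cl_rel c d /\ gen_span c d = (W + W')%VS.
Proof.
apply: (isotropic_pair_cl_basis (phi := cl_pairing a b)) W_nondeg _
  => [w1 w2 Ww1 Ww2 | w1 w2 Ww1 Ww2 | w w' Ww Ww' |].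
- by apply: (acomm_spanU_a hab); [apply: subvP W_spanU _ Ww1 | apply: subvP W_spanU _ Ww2].
- by apply: (acomm_spanU_b hab); [apply: subvP W'_spanU _ Ww1 | apply: subvP W'_spanU _ Ww2].
- by apply: (acomm_spanU_pairing hab); [apply: subvP W_spanU _ Ww | apply: subvP W'_spanU _ Ww'].
- by rewrite dimW dimW'.
Qed.

Local Notation XY_span := (span [:: 1; X; Y; X * Y]).

Lemma PhiX_sqr : X * X = 0.
Proof. exact/(double_eq0 two_neq0)/(acomm_spanU_a hab PhiX_spanU PhiX_spanU). Qed.

Lemma PhiY_sqr : Y * Y = 0.
Proof. exact/(double_eq0 two_neq0)/(acomm_spanU_b hab PhiY_spanU PhiY_spanU). Qed.

Lemma PhiYX : Y * X = kappa *: 1 - X * Y.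
Proof. by rewrite -acomm_PhiXY /acomm addrC addKr. Qed.

Lemma mulX_XY_span : (<[X]> * XY_span <= XY_span)%VS.
Proof.
apply: span_line_absorb => y.
move=> /predU1P [-> | /predU1P [-> | /predU1P [-> | /predU1P [-> | //]]]].
- by rewrite mulr1 memv_span // !inE eqxx ?(orTb, orbT).
- by rewrite PhiX_sqr mem0v.
- by rewrite memv_span // !inE eqxx ?(orTb, orbT).
- by rewrite mulrA PhiX_sqr mul0r mem0v.
Qed.

Lemma mulY_XY_span : (<[Y]> * XY_span <= XY_span)%VS.
Proof.
have mem1 : 1 \in XY_span by rewrite memv_span ?mem_head.
have memY : Y \in XY_span by rewrite memv_span // !inE eqxx ?(orTb, orbT).
have memXY : X * Y \in XY_span by rewrite memv_span // !inE eqxx ?(orTb, orbT).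
apply: span_line_absorb => y.
move=> /predU1P [-> | /predU1P [-> | /predU1P [-> | /predU1P [-> | //]]]].
- by rewrite mulr1.
- by rewrite PhiYX memvB ?memvZ.
- by rewrite PhiY_sqr mem0v.
- by rewrite mulrA PhiYX mulrBl -scalerAl mul1r -mulrA PhiY_sqr mulr0 subr0 memvZ.
Qed.

Lemma parity_E e : e \in E -> parity e \in E.
Proof. exact: (cl_parity_agenv two_neq0 hab W_gen). Qed.

Lemma fullv_sub_E_XY : (fullv <= E * XY_span)%VS.
Proof.
have W_E V : (V <= W + W')%VS -> (V * (E * XY_span) <= E * XY_span)%VS.
  move=> VW; rewrite prodvA prodvSl //; apply/prodvP => w e Vw Ee.
  by apply: memv_agenvM => //; apply/memv_agenv/(subvP VW).
have XY_E u : u \in (<[X]> + <[Y]>)%VS -> (<[u]> * XY_span <= XY_span)%VS ->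
    (<[u]> * (E * XY_span) <= E * XY_span)%VS.
  move=> u_XY uF; rewrite prodvA.
  apply: subv_trans (prodvSl _ (_ : <[u]> * E <= E * <[u]>)%VS) _; last by rewrite -prodvA prodvSr.
  apply/prodvP => _ e /vlineP [k ->] Ee.
  by rewrite -scalerAl mul_PhiXY_E // memvZ // memv_mul ?parity_E ?memv_line.
have gen_mul : (gen_span a b * (E * XY_span) <= E * XY_span)%VS.
  rewrite [gen_span a b]/(spanU a + spanU b)%VS spanU_a_decomp.1 spanU_b_decomp.1.
  rewrite !prodvDl !subv_add.
  by rewrite (XY_E X) ?(XY_E Y) ?W_E ?mulX_XY_span ?mulY_XY_span ?addvSl ?addvSr ?PhiX_XY ?PhiY_XY.
rewrite -gen_ab; apply: agenv_sub_mulclosed => [|v x ab_v x_EF].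
  by have := memv_mul (mem1_agenv (W + W')%VS) (memv_span (mem_head 1 _)); rewrite mulr1.
exact/(subvP gen_mul)/memv_mul.
Qed.

Lemma dimE_ge : (4 ^ m <= \dim E)%N.
Proof.
have dimF : (\dim XY_span <= 4)%N := dim_span _.
have := leq_trans (dimvS fullv_sub_E_XY) (leq_trans (dim_prodv _ _) (leq_mul (leqnn _) dimF)).
by rewrite dimA expnSr leq_pmul2r.
Qed.

Lemma E_clifford : exists c d : 'I_(\dim W) -> A, is_clifford_on E c d.
Proof.
have [c [d [cd gen_cd]]] := W_cl_basis.
exists c, d; split => //; last 2 first.
- by rewrite gen_cd.
- by apply/eqP; rewrite eqn_leq -{1}gen_cd (dim_agenv_cl two_neq0 cd) dimW dimE_ge.
move=> i; rewrite -gen_cd; split; apply: memv_agenv.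
  exact: subvP (addvSl _ _) _ (memv_spanU c i).
exact: subvP (addvSr _ _) _ (memv_spanU d i).
Qed.

Lemma parity_PhiX : parity X = - X.
Proof. exact/(cl_parity_gen two_neq0 hab)/(subvP (addvSl _ _) _ PhiX_spanU). Qed.

Lemma parity_PhiY : parity Y = - Y.
Proof. exact/(cl_parity_gen two_neq0 hab)/(subvP (addvSr _ _) _ PhiY_spanU). Qed.

Lemma parity_PhiYX : parity (Y * X) = Y * X.
Proof. by rewrite (cl_parityM two_neq0 hab) parity_PhiX parity_PhiY mulrNN. Qed.

Lemma PhiX_E e : e \in E -> X * e = parity e * X.
Proof. exact: mul_PhiXY_E PhiX_XY. Qed.

Lemma PhiY_E e : e \in E -> Y * e = parity e * Y.
Proof. exact: mul_PhiXY_E PhiY_XY. Qed.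

Lemma mulr_PhiX_sqr t : t * X * X = 0.
Proof. by rewrite -mulrA PhiX_sqr mulr0. Qed.

Lemma mulr_PhiY_sqr t : t * Y * Y = 0.
Proof. by rewrite -mulrA PhiY_sqr mulr0. Qed.

Lemma mulr_PhiYXY t : t * Y * X * Y = kappa *: (t * Y).
Proof.
by rewrite -!mulrA (mulrA Y) PhiYX mulrBl -scalerAl mul1r -mulrA PhiY_sqr mulr0 subr0 scalerAr.
Qed.

Lemma intertwiner_E_form y : X * y = parity y * X -> Y * y = parity y * Y ->
  exists e0 e3, [/\ e0 \in E, e3 \in E & y = e0 + e3 * (Y * X)].
Proof.
(* Sandwiching y between X and Y, or between Y and X, kills every component
   except those of e0 and e3; the two sandwiches add up to kappa. *)
move=> Xy Yy; have : y \in (E * XY_span)%VS := subvP fullv_sub_E_XY _ (memvf y).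
rewrite !span_cons span_nil addv0 !prodvDr.
case/memv_addP => _ /memv_prodv_line [e0 Ee0 ->] [_ /memv_addP [w1 Xw1 [w23 w23_in ->]]].
case/memv_prodv_line: Xw1 => e1 Ee1 ->; case/memv_addP: w23_in => _ /memv_prodv_line [e2 Ee2 ->].
case=> _ /memv_prodv_line [e3 Ee3 ->] ->; rewrite mulr1 => y_eq.
have kappaE t : kappa *: t = t * X * Y + t * Y * X.
  by rewrite -!mulrA -mulrDr -[X * Y + Y * X]/(acomm X Y) acomm_PhiXY -scalerAr mulr1.
have XyY : parity y * X * Y = parity e0 * X * Y.
  rewrite -Xy y_eq !mulrDr !mulrDl !mulrA (PhiX_E Ee0) (PhiX_E Ee1) (PhiX_E Ee2) (PhiX_E Ee3).
  by rewrite !mulr_PhiX_sqr !mulr_PhiY_sqr !mul0r !addr0.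
have YyX : parity y * Y * X = parity e0 * Y * X + kappa *: (parity e3 * Y * X).
  rewrite -Yy y_eq !mulrDr !mulrDl !mulrA (PhiY_E Ee0) (PhiY_E Ee1) (PhiY_E Ee2) (PhiY_E Ee3).
  by rewrite !mulr_PhiX_sqr !mulr_PhiY_sqr mulr_PhiYXY !mul0r !add0r -scalerAl.
exists e0, e3; split => //; apply: (can_inj (cl_parityK two_neq0 hab)).
rewrite linearD /= (cl_parityM two_neq0 hab) parity_PhiYX mulrA; apply: (scalerI kappa_neq0).
by rewrite kappaE XyY YyX scalerDr addrA -kappaE.
Qed.

Lemma intertwiner_in_E y : X * y = parity y * X -> Y * y = parity y * Y -> y \in E.
Proof.
move=> Xy Yy; have [e0 [e3 [Ee0 Ee3 y_eq]]] := intertwiner_E_form Xy Yy.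
have Yy_l : Y * y = parity e0 * Y.
  by rewrite y_eq mulrDr (PhiY_E Ee0) mulrA (PhiY_E Ee3) mulrA mulr_PhiY_sqr mul0r addr0.
have Yy_r : parity y * Y = parity e0 * Y + kappa *: (parity e3 * Y).
  by rewrite y_eq linearD /= (cl_parityM two_neq0 hab) parity_PhiYX mulrDl mulrA mulr_PhiYXY.
have /eqP : kappa *: (parity e3 * Y) = 0.
  by apply: (addrI (parity e0 * Y)); rewrite addr0 -Yy_r -Yy Yy_l.
rewrite scaler_eq0 (negPf kappa_neq0) /= => /eqP /(congr1 parity).
rewrite (cl_parityM two_neq0 hab) (cl_parityK two_neq0 hab) parity_PhiY linear0 mulrN.
by move/eqP; rewrite oppr_eq0 y_eq mulrA => /eqP ->; rewrite mul0r addr0.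
Qed.

Lemma E_supercomm_hom (p : bool) c : c \in E -> parity c = (-1) ^+ p *: c ->
  supercomm_hom a b B p c.
Proof.
move=> Ec c_par; split; first by apply: (cl_part_parity two_neq0 hab); rewrite ?gen_ab ?memvf.
move=> q g /[!memv_cap] /andP [Bg g_q].
have XY_c v : v \in (<[X]> + <[Y]>)%VS -> v * c = (-1) ^+ p *: (c * v).
  by move=> XYv; rewrite mul_PhiXY_E // c_par -scalerAl.
rewrite (agenv_supercomm two_neq0 hab PhiXY_gen XY_c Bg (cl_parity_part two_neq0 hab g_q)).
by rewrite -mulrA mulr_sign scaler_sign.
Qed.

Lemma E_sub_supercommutant x : x \in E -> in_supercommutant a b B x.
Proof.
move=> Ex; pose x0 := (2%:R : K)^-1 *: (x + parity x); pose x1 := (2%:R : K)^-1 *: (x - parity x).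
have x0E : x0 \in E by rewrite memvZ // memvD // parity_E.
have x1E : x1 \in E by rewrite memvZ // memvB // parity_E.
have x0_even : parity x0 = (-1) ^+ false *: x0.
  by rewrite scale1r linearZ linearD /= (cl_parityK two_neq0 hab) addrC.
have x1_odd : parity x1 = (-1) ^+ true *: x1.
  by rewrite expr1 scaleN1r linearZ linearB /= (cl_parityK two_neq0 hab) -scalerN opprB.
exists 2, (fun t : 'I_2 => if t == ord0 then x0 else x1), (fun=> 1); split.
  move=> t; case: (t == ord0); [exists false | exists true]; exact: E_supercomm_hom.
rewrite big_ord_recl big_ord1 /= !scale1r -scalerDr addrACA subrr addr0.
by rewrite -mulr2n -scaler_nat scalerA mulVf // scale1r.
Qed.

Lemma supercommutant_sub_E x : in_supercommutant a b B x -> x \in E.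
Proof.
case=> k [c [l [c_hom ->]]]; apply: memv_suml => t _; apply: memvZ.
have [p [c_p c_sc]] := c_hom t; have c_par := cl_parity_part two_neq0 hab c_p.
have odd_B u : u \in (<[X]> + <[Y]>)%VS -> u \in (B :&: cl_part a b true)%VS.
  move=> XYu; rewrite memv_cap memv_agenv //=.
  exact/(subvP (gen_span_odd a b))/(subvP PhiXY_gen).
apply: intertwiner_in_E.
  by rewrite (c_sc true X (odd_B X PhiX_XY)) andbT c_par -mulrA -scalerAl mulr_sign scaler_sign.
by rewrite (c_sc true Y (odd_B Y PhiY_XY)) andbT c_par -mulrA -scalerAl mulr_sign scaler_sign.
Qed.

End PhiXYCommutant.

Unset Implicit Arguments.

Theorem mainTheorem2
  (K : numClosedFieldType) (N : nat) (hN : (0 < N)%N)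
  (z : 'I_N -> K) (hz : forall i, z i != 0) (nn : 'I_N -> K)
  (A : falgType K) (a b : 'I_N -> A)
  (hCl : is_clifford_on fullv a b)
  (W W' : {vspace A})
  (hW : forall w, w \in W = (w \in spanU a) && (cl_pairing a b w (PhiY z b) == 0))
  (hW' : forall w, w \in W' = (w \in spanU b) && (cl_pairing a b (PhiX z a) w == 0))
  (hzz : (\prod_(i < N) z i) ^+ 2 - (\prod_(i < N) z i) ^- 2 != 0) :
  [/\ spanU a = (<[PhiX z a]> + W)%VS /\ directv (<[PhiX z a]> + W)%VS,
      spanU b = (<[PhiY z b]> + W')%VS /\ directv (<[PhiY z b]> + W')%VS,
      exists c d : 'I_(\dim W) -> A, is_clifford_on (agenv (W + W')%VS) c d &
      forall x, x \in agenv (W + W')%VS <->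
        in_supercommutant a b (agenv (<[PhiX z a]> + <[PhiY z b]>)%VS) x].
Proof.
case: N hN z hz nn a b hCl hW hW' hzz => // m _ z _ _ a b [_ hab gen_ab dimA].
move=> hW hW' kappa_neq0.
have two_neq0 : (2%:R : K) != 0 by rewrite pnatr_eq0.
split.
- exact (spanU_a_decomp hab hW kappa_neq0).
- exact (spanU_b_decomp hab hW' kappa_neq0).
- exact (E_clifford two_neq0 hab gen_ab dimA hW hW' kappa_neq0).
move=> x; split.
  exact (E_sub_supercommutant two_neq0 hab gen_ab hW hW' (x := x)).
exact (supercommutant_sub_E two_neq0 hab gen_ab hW hW' kappa_neq0 (x := x)).
Qed.
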